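(* Let $G$ be a connected graph of order at least three. Then $\gamma(G)=\gamma_{\rm cer}(G)$ if and only if $G$ has a $\gamma$-set $D$ such that every vertex in $D$ has at least two neighbors in $V_G-D$.
   Context: All graphs are finite and simple; $V_G$ is the vertex set of $G$ and $N_G(v)$ the open neighborhood of $v$. A set $D\subseteq V_G$ is a dominating set of $G$ if every vertex of $V_G-D$ has a neighbor in $D$; $\gamma(G)$ is the minimum cardinality of a dominating set, and a $\gamma$-set is a dominating set of cardinality $\gamma(G)$. A set $D\subseteq V_G$ is a certified dominating set of $G$ if $D$ is a dominating set of $G$ and every vertex of $D$ has either zero or at least two neighbors in $V_G-D$; $\gamma_{\rm cer}(G)$ is the minimum cardinality of a certified dominating set of $G$. *)

From mathcomp Require Import all_boot.
Set Implicit Arguments. Unset Strict Implicit. Unset Printing Implicit Defensive.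

Definition simple_graph (T : finType) (e : rel T) : Prop :=
  symmetric e /\ irreflexive e.

Definition connected_graph (T : finType) (e : rel T) : Prop :=
  forall x y : T, connect e x y.

Definition nbhd (T : finType) (e : rel T) (v : T) : {set T} := [set u | e v u].

Definition dominating (T : finType) (e : rel T) (D : {set T}) : bool :=
  [forall v, (v \notin D) ==> [exists u, (u \in D) && e v u]].

Definition certified_dominating (T : finType) (e : rel T) (D : {set T}) : bool :=
  dominating e D &&
  [forall v in D, (#|nbhd e v :\: D| == 0) || (2 <= #|nbhd e v :\: D|)].

(* gamma(G): minimum cardinality of a dominating set (V itself dominates,
   so the default #|T| is never below the true minimum) *)
Definition gamma (T : finType) (e : rel T) : nat :=
  \big[minn/#|T|]_(D : {set T} | dominating e D) #|D|.

(* gamma_cer(G): minimum cardinality of a certified dominating set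
   (V itself is certified dominating) *)
Definition gamma_cer (T : finType) (e : rel T) : nat :=
  \big[minn/#|T|]_(D : {set T} | certified_dominating e D) #|D|.

Definition gamma_set (T : finType) (e : rel T) (D : {set T}) : bool :=
  dominating e D && (#|D| == gamma e).

From mathcomp Require Import all_boot.

Set Implicit Arguments.
Unset Strict Implicit.
Unset Printing Implicit Defensive.

(* A minimum certified dominating set D is a gamma-set when gamma = gamma_cer.
   If some v in D had no neighbour outside D, then v, which has a neighbour
   because G is connected with at least two vertices, is dominated by D :\ v,
   and every vertex dominated by v is dominated by D :\ v as well; so D :\ v
   would be a dominating set smaller than gamma.  Conversely a gamma-set whose
   vertices all have two outside neighbours is certified, so gamma_cer <= gamma. *)

Section MinCard.

Variables (T : finType) (P : pred {set T}).

Lemma bigmin_card_le (D : {set T}) :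
  P D -> \big[minn/#|T|]_(X : {set T} | P X) #|X| <= #|D|.
Proof.
move=> PD; rewrite unlock.
have : D \in index_enum {set T} by rewrite mem_index_enum.
elim: (index_enum _) => [//|X s IHs] /=.
rewrite inE => /orP[/eqP <-|Ds]; first by rewrite PD geq_minl.
by case: (P X); rewrite ?geq_min IHs ?orbT.
Qed.

Lemma bigmin_card_attained :
  P setT -> exists2 D, P D & \big[minn/#|T|]_(X : {set T} | P X) #|X| = #|D|.
Proof.
move=> PT; have [D PD Dmin] := arg_minnP (fun X : {set T} => #|X|) PT.
exists D => //; apply/eqP; rewrite eqn_leq bigmin_card_le //=.
apply: (big_ind (fun n => #|D| <= n)); first exact: max_card.
  by move=> m n Dm Dn; rewrite leq_min Dm Dn.
exact: Dmin.
Qed.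

End MinCard.

Section Domination.

Variables (T : finType) (e : rel T).

Lemma certified_dominating_dominating (D : {set T}) :
  certified_dominating e D -> dominating e D.
Proof. by case/andP. Qed.

Lemma certified_dominating_setT : certified_dominating e setT.
Proof.
apply/andP; split; first by apply/forallP => v; rewrite in_setT.
by apply/forall_inP => v _; rewrite setDT cards0.
Qed.

Lemma gamma_le (D : {set T}) : dominating e D -> gamma e <= #|D|.
Proof. exact: bigmin_card_le. Qed.

Lemma gamma_cer_le (D : {set T}) : certified_dominating e D -> gamma_cer e <= #|D|.
Proof. exact: bigmin_card_le. Qed.

Lemma gamma_cer_attained :
  exists2 D, certified_dominating e D & #|D| = gamma_cer e.
Proof.
have [D cerD Dmin] := bigmin_card_attained certified_dominating_setT.
by exists D; rewrite // /gamma_cer Dmin.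
Qed.

Lemma gamma_le_gamma_cer : gamma e <= gamma_cer e.
Proof.
have [D /certified_dominating_dominating domD <-] := gamma_cer_attained.
exact: gamma_le.
Qed.

Lemma connected_exists_neighbor :
  connected_graph e -> 1 < #|T| -> forall v, exists u, e v u.
Proof.
move=> conn T_gt1 v.
have [w wv] : exists w, w != v.
  case: (pickP [pred w | w != v]) => [w wv|all_v]; first by exists w.
  move: T_gt1; rewrite ltnNge => /negP[]; apply/card_le1_eqP => x y _ _.
  by move: (all_v x) (all_v y) => /= /negbFE/eqP-> /negbFE/eqP->.
move: (conn v w) => /connectP[[|u p] /= path_p w_last].
  by move: wv; rewrite w_last eqxx.
by exists u; case/andP: path_p.
Qed.

Lemma dominating_setD1 (D : {set T}) (u v : T) :
  symmetric e -> dominating e D -> nbhd e v \subset D ->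
  u \in D :\ v -> e v u -> dominating e (D :\ v).
Proof.
move=> esym domD NvD uDv evu; apply/forallP => x; apply/implyP.
rewrite !inE negb_and negbK => /orP[/eqP-> | xD].
  by apply/existsP; exists u; rewrite uDv evu.
have /existsP[y /andP[yD exy]] := implyP (forallP domD x) xD.
apply/existsP; exists y; rewrite !inE yD exy !andbT.
apply: contraNneq xD => yv; apply: (subsetP NvD).
by rewrite inE -esym -yv.
Qed.

End Domination.

Theorem theorem2p1 (T : finType) (e : rel T) :
  simple_graph e -> connected_graph e -> 3 <= #|T| ->
  (gamma e = gamma_cer e <->
   exists D : {set T}, gamma_set e D /\
     forall v, v \in D -> 2 <= #|nbhd e v :\: D|).
Proof.
move=> [esym eirr] conn T_ge3; split => [gamma_eq | [D [/andP[domD /eqP cardD] D2]]].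
- have [D cerD cardD] := gamma_cer_attained e.
  have domD := certified_dominating_dominating cerD.
  exists D; split; first by rewrite /gamma_set domD cardD gamma_eq eqxx.
  move=> v vD; case/andP: cerD => _ /forall_inP/(_ v vD)/orP[|//].
  rewrite cards_eq0 setD_eq0 => NvD; exfalso.
  have [u evu] := connected_exists_neighbor conn (ltnW T_ge3) v.
  have uDv : u \in D :\ v.
    rewrite !inE (subsetP NvD) ?inE // andbT.
    by apply: contraTneq evu => ->; rewrite eirr.
  have := gamma_le (dominating_setD1 esym domD NvD uDv evu).
  by rewrite gamma_eq -cardD (cardsD1 v D) vD ltnn.
- apply/eqP; rewrite eqn_leq gamma_le_gamma_cer -cardD gamma_cer_le //.
  by rewrite /certified_dominating domD; apply/forall_inP => v vD; rewrite D2 ?orbT.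
Qed.
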